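(* In the Popularity Adjusted Block Model described in the context, suppose $\operatorname{rank}(\boldsymbol\Theta)=K^2$ and let $\boldsymbol\Xi\in\mathbb R^{n\times K^2}$ be a matrix of orthonormal eigenvectors of $\boldsymbol\Theta$ for its $K^2$ nonzero eigenvalues, with rows $\boldsymbol\xi_{i\cdot}$. Let $\tau_{ij}=|\cos(\boldsymbol\xi_{i\cdot},\boldsymbol\xi_{j\cdot})|$. Then for $i,j\in[n]$ (with $\boldsymbol\xi_{i\cdot},\boldsymbol\xi_{j\cdot}\neq0$), $$\tau_{ij}=\begin{cases}\left|\dfrac{D_{\boldsymbol P_{\boldsymbol c^\ast(i)}}(\boldsymbol\lambda_{i\cdot},\boldsymbol\lambda_{j\cdot})}{D^{1/2}_{\boldsymbol P_{\boldsymbol c^\ast(i)}}(\boldsymbol\lambda_{i\cdot},\boldsymbol\lambda_{i\cdot})\,D^{1/2}_{\boldsymbol P_{\boldsymbol c^\ast(i)}}(\boldsymbol\lambda_{j\cdot},\boldsymbol\lambda_{j\cdot})}\right|, & \boldsymbol c^\ast(i)=\boldsymbol c^\ast(j),\\[2mm] 0, & \boldsymbol c^\ast(i)\ne\boldsymbol c^\ast(j).\end{cases}$$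
   Context: Notation: $[m]=\{1,\dots,m\}$. Popularity Adjusted Block Model: integers $n$, $K\ge2$, a label vector $\boldsymbol c^\ast\in[K]^n$, a popularity matrix $\boldsymbol\Lambda=(\lambda_{ik})\in[0,1]^{n\times K}$ with rows $\boldsymbol\lambda_{i\cdot}\in\mathbb R^K$. The edge probability matrix is $\boldsymbol\Theta=(\theta_{ij})_{n\times n}$, $\theta_{ij}=\lambda_{i\boldsymbol c^\ast(j)}\lambda_{j\boldsymbol c^\ast(i)}$. For $k\in[K]$, $\boldsymbol\Lambda^{(k,\cdot)}$ is the submatrix of $\boldsymbol\Lambda$ consisting of the rows $i$ with $\boldsymbol c^\ast(i)=k$, $\boldsymbol P_k=(\boldsymbol\Lambda^{(k,\cdot)\top}\boldsymbol\Lambda^{(k,\cdot)})^{-1}$, and $D_{\boldsymbol P_k}(\boldsymbol x,\boldsymbol y)=\boldsymbol x^\top\boldsymbol P_k\boldsymbol y$ for $\boldsymbol x,\boldsymbol y\in\mathbb R^K$. $\cos(\boldsymbol x,\boldsymbol y)=\boldsymbol x^\top\boldsymbol y/(\|\boldsymbol x\|\|\boldsymbol y\|)$. *)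

From HB Require Import structures.
From mathcomp Require Import all_boot all_order all_algebra.
Set Implicit Arguments. Unset Strict Implicit. Unset Printing Implicit Defensive.
Import Order.TTheory GRing.Theory Num.Theory.
Local Open Scope ring_scope.

Section PABM.
Variable R : rcfType.

Definition pabm_Theta (n K : nat) (c : 'I_n -> 'I_K) (Lam : 'M[R]_(n, K))
  : 'M[R]_n := \matrix_(i, j) (Lam i (c j) * Lam j (c i)).

(* Lambda^{(k,.)T} Lambda^{(k,.)} : sum over the rows i with c(i) = k *)
Definition pabm_gram (n K : nat) (c : 'I_n -> 'I_K) (Lam : 'M[R]_(n, K))
  (k : 'I_K) : 'M[R]_K :=
  \matrix_(a, b) \sum_(i < n | c i == k) Lam i a * Lam i b.

Definition pabm_P (n K : nat) (c : 'I_n -> 'I_K) (Lam : 'M[R]_(n, K))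
  (k : 'I_K) : 'M[R]_K := invmx (pabm_gram c Lam k).

Definition DP (K : nat) (P : 'M[R]_K) (x y : 'rV[R]_K) : R :=
  (x *m P *m y^T) 0 0.

Definition dotv (m : nat) (u v : 'rV[R]_m) : R := (u *m v^T) 0 0.
Definition normv (m : nat) (u : 'rV[R]_m) : R := Num.sqrt (dotv u u).
Definition cosv (m : nat) (u v : 'rV[R]_m) : R :=
  dotv u v / (normv u * normv v).

End PABM.

From HB Require Import structures.
From mathcomp Require Import all_boot all_order all_algebra.
Set Implicit Arguments. Unset Strict Implicit. Unset Printing Implicit Defensive.
Import Order.TTheory GRing.Theory Num.Theory.
Local Open Scope ring_scope.

(* Write Theta = U V^T, where the columns of U and V are indexed by pairs
   (k, l) and U_{i,(k,l)} = [c(i) = k] lambda_{il}, V_{j,(k,l)} = [c(j) = l] lambda_{jk}.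
   The eigen-equation with nonzero eigenvalues gives Xi = U B, and orthonormality of
   Xi forces B to be invertible and U to have full column rank K^2.  Then Xi Xi^T is
   the orthogonal projector onto the column space of U, i.e. U (U^T U)^-1 U^T; as U^T U
   is block diagonal with the Gram blocks Lambda^(k,.)^T Lambda^(k,.), this projector
   has entries [c(i) = c(j)] D_{P_c(i)}(lambda_i, lambda_j), and tau_ij is its (i, j)
   entry normalised by the diagonal ones. *)

Section OrthonormalFactor.
Variables (F : fieldType) (n p : nat) (Xi U : 'M[F]_(n, p)) (B : 'M[F]_p).
Hypothesis Xi_orthonormal : Xi^T *m Xi = 1%:M.
Hypothesis Xi_factor : Xi = U *m B.

Lemma mxrank_orthonormal : \rank Xi = p.
Proof.
apply/eqP; rewrite eqn_leq rank_leq_col /=.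
by rewrite -{1}(mxrank1 F p) -Xi_orthonormal mxrankM_maxr.
Qed.

Lemma orthonormal_factor_unit : B \in unitmx.
Proof.
rewrite -row_free_unit /row_free eqn_leq rank_leq_col /=.
by rewrite -{1}mxrank_orthonormal Xi_factor mxrankM_maxr.
Qed.

Lemma orthonormal_factor_free : row_free U^T.
Proof.
rewrite /row_free mxrank_tr eqn_leq rank_leq_col /=.
by rewrite -{1}mxrank_orthonormal Xi_factor mxrankM_maxl.
Qed.

Lemma orthonormal_projector_eq (Z : 'M[F]_n) (D : 'M[F]_(p, n)) :
  Z^T = Z -> Z = U *m D -> Z *m U = U -> Xi *m Xi^T = Z.
Proof.
move=> Z_sym Z_factor ZU.
have U_factor : U = Xi *m invmx B by rewrite Xi_factor mulmxK ?orthonormal_factor_unit.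
have projZ : Xi *m Xi^T *m Z = Z.
  by rewrite Z_factor U_factor !mulmxA -(mulmxA Xi) Xi_orthonormal mulmx1.
have Zproj : Z *m (Xi *m Xi^T) = Xi *m Xi^T.
  by rewrite {1}Xi_factor !mulmxA ZU -Xi_factor.
transitivity ((Z *m (Xi *m Xi^T))^T); first by rewrite Zproj trmx_mul trmxK.
by rewrite trmx_mul Z_sym trmx_mul trmxK projZ.
Qed.

End OrthonormalFactor.

Lemma diag_mx_unit (F : fieldType) m (d : 'rV[F]_m) :
  (forall l, d 0 l != 0) -> diag_mx d \in unitmx.
Proof. by move=> d_neq0; rewrite unitmxE det_diag unitfE; apply/prodf_neq0. Qed.

Section RowProducts.
Variable R : comPzRingType.

Lemma mul_tr_rowE m n p (A : 'M[R]_(m, p)) (B : 'M[R]_(n, p)) i j :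
  (A *m B^T) i j = (row i A *m (row j B)^T) 0 0.
Proof. by rewrite !mxE; apply: eq_bigr => l _; rewrite !mxE. Qed.

Lemma mxvec_outer_mul m n (u x : 'rV[R]_m) (v y : 'rV[R]_n) :
  mxvec (u^T *m v) *m (mxvec (x^T *m y))^T = u *m x^T *m (y *m v^T).
Proof. by rewrite mxvec_dotmul !mulmxA. Qed.

Lemma delta_mul_tr m (k : 'I_m) (x : 'rV[R]_m) :
  delta_mx 0 k *m x^T = (x 0 k)%:M.
Proof. by rewrite -rowE [LHS]mx11_scalar !mxE. Qed.

End RowProducts.

Section RowForms.
Variable R : rcfType.

Lemma DP_sym m (P : 'M[R]_m) (x y : 'rV[R]_m) : P^T = P -> DP P y x = DP P x y.
Proof.
move=> P_sym; transitivity ((x *m P *m y^T)^T 0 0); last by rewrite mxE.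
by rewrite !trmx_mul trmxK P_sym mulmxA.
Qed.

Lemma DP_scale m (P : 'M[R]_m) (x y : 'rV[R]_m) : DP P x y *: y = x *m P *m (y^T *m y).
Proof. by rewrite /DP mulmxA {2}[x *m P *m y^T]mx11_scalar mul_scalar_mx. Qed.

Lemma dotv_row m p (A : 'M[R]_(m, p)) i j :
  dotv (row i A) (row j A) = (A *m A^T) i j.
Proof. by rewrite mul_tr_rowE. Qed.

End RowForms.

Section PopularityFactorization.
Variables (R : rcfType) (n K : nat) (c : 'I_n -> 'I_K) (Lam : 'M[R]_(n, K)).
Local Notation e k := (delta_mx 0 k : 'rV[R]_K).
Local Notation lam i := (row i Lam).
Local Notation P := (pabm_P c Lam).

(* Pair indices (k, l) are encoded by mxvec_index k l. *)
Definition pabm_U : 'M[R]_(n, K * K) := \matrix_i mxvec ((e (c i))^T *m lam i).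
Definition pabm_V : 'M[R]_(n, K * K) := \matrix_i mxvec ((lam i)^T *m e (c i)).
Definition pabm_W : 'M[R]_(n, K * K) :=
  \matrix_i mxvec ((e (c i))^T *m (lam i *m (P (c i))^T)).
Definition pabm_proj : 'M[R]_n :=
  \matrix_(i, j) (if c i == c j then DP (P (c i)) (lam i) (lam j) else 0).

Lemma pabm_Theta_factor : pabm_Theta c Lam = pabm_U *m pabm_V^T.
Proof.
apply/matrixP => i j; rewrite mul_tr_rowE !rowK mxvec_outer_mul.
by rewrite !delta_mul_tr -scalar_mxM !mxE mulr1n mulrC.
Qed.

Lemma pabm_proj_factor : pabm_proj = pabm_U *m pabm_W^T.
Proof.
apply/matrixP => i j; rewrite mul_tr_rowE !rowK mxvec_outer_mul delta_mul_tr.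
have -> : lam j *m (P (c j))^T *m (lam i)^T = (lam i *m P (c j) *m (lam j)^T)^T.
  by rewrite !trmx_mul !trmxK mulmxA.
rewrite mul_scalar_mx mxE [in RHS]mxE [_^T 0 0]mxE [delta_mx _ _ _ _]mxE /= eq_sym.
by case: eqVneq => [->|_]; rewrite /= ?mul1r ?mul0r.
Qed.

Lemma pabm_P_sym k : (P k)^T = P k.
Proof.
rewrite /pabm_P trmx_inv; congr invmx; apply/matrixP => a b; rewrite !mxE.
by apply: eq_bigr => j _; rewrite mulrC.
Qed.

Lemma pabm_proj_sym : pabm_proj^T = pabm_proj.
Proof.
apply/matrixP => i j; rewrite !mxE eq_sym.
by case: eqVneq => // cij; rewrite cij DP_sym ?pabm_P_sym.
Qed.

Lemma pabm_gramE k : pabm_gram c Lam k = \sum_(i | c i == k) (lam i)^T *m lam i.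
Proof.
apply/matrixP => a b; rewrite summxE !mxE; apply: eq_bigr => i _.
by rewrite !mxE big_ord1 !mxE.
Qed.

Lemma pabm_gram_reproduce k (x : 'rV[R]_K) : pabm_gram c Lam k \in unitmx ->
  \sum_(i | c i == k) DP (P k) x (lam i) *: lam i = x.
Proof.
move=> G_unit; under eq_bigr do rewrite DP_scale.
by rewrite -mulmx_sumr -pabm_gramE mulmxKV.
Qed.

Lemma pabm_projU : (forall k, pabm_gram c Lam k \in unitmx) ->
  pabm_proj *m pabm_U = pabm_U.
Proof.
move=> G_unit; apply/row_matrixP => i; rewrite row_mul mulmx_sum_row rowK.
rewrite (bigID (fun j => c j == c i)) /= [X in _ + X]big1 ?addr0; last first.
  by move=> j /negbTE cj; rewrite !mxE eq_sym cj scale0r.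
under eq_bigr => j /eqP cj do rewrite rowK !mxE cj eqxx -linearZ /= scalemxAr.
by rewrite -linear_sum -mulmx_sumr pabm_gram_reproduce.
Qed.

Lemma pabm_gram_quad k (v : 'rV[R]_K) :
  (v *m pabm_gram c Lam k *m v^T) 0 0 = \sum_(i | c i == k) ((lam i *m v^T) 0 0) ^+ 2.
Proof.
rewrite pabm_gramE mulmx_sumr mulmx_suml summxE; apply: eq_bigr => i _.
have -> : v *m ((lam i)^T *m lam i) *m v^T = (lam i *m v^T)^T *m (lam i *m v^T).
  by rewrite trmx_mul trmxK !mulmxA.
by rewrite mxE big_ord1 mxE expr2.
Qed.

Lemma pabm_gram_unit : row_free pabm_U^T -> forall k, pabm_gram c Lam k \in unitmx.
Proof.
move=> U_free k; rewrite unitmxE unitfE; apply/det0P => -[v v_neq0 vG0].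
have lam_v i : c i == k -> lam i *m v^T = 0.
  move: (pabm_gram_quad k v); rewrite vG0 mul0mx mxE => /esym/psumr_eq0P sq0 cik.
  apply/rowP => r; rewrite ord1 [RHS]mxE; apply/eqP; rewrite -sqrf_eq0.
  by apply/eqP/sq0 => // j _; apply: sqr_ge0.
have : mxvec ((e k)^T *m v) *m pabm_U^T = 0.
  apply/rowP => j; rewrite mul_tr_rowE row_id rowK mxvec_outer_mul delta_mul_tr.
  rewrite [RHS]mxE; have [/eqP cjk | /negbTE cjk] := eqVneq (c j) k.
    by rewrite lam_v // mulmx0 mxE.
  by rewrite [delta_mx _ _ _ _]mxE eq_sym cjk mul_scalar_mx scale0r mxE.
move/eqP; rewrite mulmx_free_eq0 // mxvec_eq0 => /eqP/matrixP ev0.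
apply/negP: v_neq0; rewrite negbK; apply/eqP/rowP => l.
by move: (ev0 k l); rewrite !mxE big_ord1 !mxE eqxx mul1r.
Qed.

End PopularityFactorization.

Theorem corollary1 (R : rcfType) (n K : nat) (c : 'I_n -> 'I_K)
  (Lam : 'M[R]_(n, K)) (Xi : 'M[R]_(n, K ^ 2)) :
  (2 <= K)%N ->
  (forall i k, 0 <= Lam i k <= 1) ->
  \rank (pabm_Theta c Lam) = (K ^ 2)%N ->
  (* Xi has orthonormal columns, which are eigenvectors of Theta
     for its K^2 nonzero eigenvalues *)
  Xi^T *m Xi = 1%:M ->
  (exists d : 'rV[R]_(K ^ 2),
      (forall l, d 0 l != 0) /\ pabm_Theta c Lam *m Xi = Xi *m diag_mx d) ->
  forall i j : 'I_n,
    row i Xi != 0 -> row j Xi != 0 ->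
    `| cosv (row i Xi) (row j Xi) | =
    (if c i == c j then
       `| DP (pabm_P c Lam (c i)) (row i Lam) (row j Lam) /
          (Num.sqrt (DP (pabm_P c Lam (c i)) (row i Lam) (row i Lam)) *
           Num.sqrt (DP (pabm_P c Lam (c i)) (row j Lam) (row j Lam))) |
     else 0).
Proof.
move=> _ _ _ Xi_orthonormal [d [d_neq0 Theta_Xi]] i j _ _.
have Xi_factor : Xi = pabm_U c Lam *m ((pabm_V c Lam)^T *m Xi *m invmx (diag_mx d)).
  by rewrite !mulmxA -pabm_Theta_factor Theta_Xi mulmxK ?diag_mx_unit.
have G_unit := pabm_gram_unit (orthonormal_factor_free Xi_orthonormal Xi_factor).
have Xi_proj := orthonormal_projector_eq Xi_orthonormal Xi_factor
  (pabm_proj_sym c Lam) (pabm_proj_factor c Lam) (pabm_projU G_unit).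
rewrite /cosv /normv !dotv_row Xi_proj !mxE !eqxx.
by case: eqVneq => [->|_]; rewrite ?mul0r ?normr0.
Qed.
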